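(* Let $(q_n)$ be the Fibonacci Quilt sequence. For each integer $m\ge0$ let $d_{\rm FQ}(m)$ be the number of FQ-legal decompositions of $m$ (with $d_{\rm FQ}(0)=1$, counting the empty decomposition), and let \[ d_{\rm FQ;ave}(n)=\frac{1}{q_{n+1}}\sum_{m=0}^{q_{n+1}-1}d_{\rm FQ}(m). \] Let $r_1\approx1.39704$ be the largest root of $r^7-r^6-r^2-1=0$, let $\lambda_1\approx1.32472$ be the real root of $x^3-x-1=0$, and set $\lambda=r_1/\lambda_1\approx1.05459$. Then there exist constants $C_2>C_1>0$ such that for all sufficiently large $n$, \[ C_1\lambda^n\le d_{\rm FQ;ave}(n)\le C_2\lambda^n. \]
   Context: Given an increasing sequence of positive integers $(q_i)_{i\ge1}$, an FQ-legal decomposition of an integer $m\ge0$ is an expression $m=q_{\ell_1}+q_{\ell_2}+\cdots+q_{\ell_t}$ ($t\ge0$, the empty sum representing $0$) with distinct indices $\ell_1>\ell_2>\cdots>\ell_t$ such that $|\ell_i-\ell_j|\notin\{1,3,4\}$ for all $i,j$, and $\{1,3\}\not\subset\{\ell_1,\dots,\ell_t\}$. The Fibonacci Quilt sequence is the increasing sequence of positive integers $(q_i)_{i\ge1}$ in which each $q_i$ is the smallest positive integer having no FQ-legal decomposition using only $q_1,\dots,q_{i-1}$. Its first terms are $1,2,3,4,5,7,9,12,16,21,28,37,49,\dots$. Two decompositions are distinct if their index sets differ. *)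

From mathcomp Require Import all_boot.
From Stdlib Require Import Reals.
Set Implicit Arguments. Unset Strict Implicit. Unset Printing Implicit Defensive.

Definition FQlegal (N : nat) (S : {set 'I_N}) : bool :=
  [forall i in S, 0 < (i : nat)] &&
  [forall i in S, forall j in S,
      ((i : nat) < j) ==> ((j - i)%N \notin [:: 1; 3; 4])] &&
  ~~ ([exists i in S, (i : nat) == 1] && [exists j in S, (j : nat) == 3]).

Definition sumq (q : nat -> nat) (N : nat) (S : {set 'I_N}) : nat :=
  \sum_(i in S) q (i : nat).

Definition has_FQdec_below (q : nat -> nat) (i m : nat) : Prop :=
  exists S : {set 'I_i}, FQlegal S /\ sumq q S = m.

(* q (indexed from 1; q 0 is irrelevant) is the Fibonacci Quilt sequence:
   an increasing sequence of positive integers in which each q_i is the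
   smallest positive integer with no FQ-legal decomposition using only
   q_1, ..., q_{i-1}. *)
Definition IsFQ (q : nat -> nat) : Prop :=
  forall i, 0 < i ->
    [/\ 0 < q i, q i < q i.+1,
        ~ has_FQdec_below q i (q i)
      & forall m, 0 < m -> m < q i -> has_FQdec_below q i m].

(* Since q is increasing and positive, q_i >= i, so every index occurring
   in a decomposition of m is <= m; hence index sets in 'I_(m+1) are all
   of them.  d_FQ(0) = 1 (the empty set). *)
Definition dFQ (q : nat -> nat) (m : nat) : nat :=
  #|[set S : {set 'I_m.+1} | FQlegal S && (sumq q S == m)]|.

Definition dFQave (q : nat -> nat) (n : nat) : R :=
  (INR (\sum_(m < q n.+1) dFQ q m) / INR (q n.+1))%R.

(* The Fibonacci Quilt sequence is forced to be 1, 2, 3, 4, 5 followed by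
   q_{n+5} = q_{n+3} + q_{n+2}: every m < q_i has a greedy legal decomposition
   into terms of index < i, while q_i itself has none.  A legal decomposition
   whose indices are all < K sums to less than q_{K+2}, and a single term of
   index > n already reaches q_{n+1}; so the legal index sets with sum below
   q_{n+1} contain those supported on [1, n-2] and are contained in those
   supported on [1, n].  Splitting on whether the top index k, and then k-2, is
   used shows that the number T(k) of legal sets supported on [1, k] satisfies
   T(k+7) = T(k+6) + T(k+2) + T(k), whence T(k) is of order r_1^k; likewise
   q_{n+1} is of order lambda_1^n, and the average is the quotient. *)

From mathcomp Require Import all_boot zify.
From Stdlib Require Import Reals Lra List.
Set Implicit Arguments. Unset Strict Implicit. Unset Printing Implicit Defensive.

(** * Growth of linear recurrences *)

Section Growth.
Local Open Scope R_scope.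

Definition grows_like (f : nat -> R) (x : R) : Prop :=
  exists c C N, 0 < c /\ forall n, (N <= n)%nat -> c * x ^ n <= f n <= C * x ^ n.

Lemma grows_like_bounds (f : nat -> R) x : 0 < x -> grows_like f x ->
  exists C1 C2, 0 < C1 /\ C1 < C2 /\
    exists N, forall n, (N <= n)%nat -> C1 * x ^ n <= f n <= C2 * x ^ n.
Proof.
move=> hx [c [C [N [hc H]]]].
have xpos n : 0 < x ^ n by apply: pow_lt.
exists c, (C + c); split=> //; split; last exists N.
- have := xpos N; have := H N (leqnn N); nra.
- by move=> n /H; have := xpos n; nra.
Qed.

Lemma grows_like_sandwich (f g : nat -> R) x j N0 : 0 < x -> grows_like f x ->
  (forall n, (N0 <= n)%nat -> f (n - j)%nat <= g n <= f n) -> grows_like g x.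
Proof.
move=> hx [c [C [N [hc H]]]] hg.
have xj : 0 < x ^ j by apply: pow_lt.
exists (c / x ^ j), C, (N + j + N0)%nat; split; first exact: Rdiv_lt_0_compat.
move=> n hn; have [g1 g2] := hg n ltac:(lia).
have [f1 _] := H (n - j)%nat ltac:(lia); have [_ f2] := H n ltac:(lia).
have -> : c / x ^ j * x ^ n = c * x ^ (n - j).
  by rewrite -{1}(subnK (_ : (j <= n)%nat)) ?pow_add; [field; lra | lia].
lra.
Qed.

Lemma grows_like_div (f g : nat -> R) x y : 0 < x -> 0 < y ->
  grows_like f x -> grows_like g y -> grows_like (fun n => f n / g n) (x / y).
Proof.
move=> hx hy [c [C [N [hc Hf]]]] [d [D [M [hd Hg]]]].
have hD : 0 < D by have := pow_lt _ M hy; have := Hg M (leqnn M); nra.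
exists (c / D), (C / d), (N + M)%nat; split; first exact: Rdiv_lt_0_compat.
move=> n hn; have [f1 f2] := Hf n ltac:(lia); have [g1 g2] := Hg n ltac:(lia).
have xn : 0 < x ^ n by apply: pow_lt.
have yn : 0 < y ^ n by apply: pow_lt.
have gn : 0 < g n by nra.
have ig : 0 < / g n by apply: Rinv_0_lt_compat.
rewrite /Rdiv Rpow_mult_distr pow_inv; split.
- have -> : c * / D * (x ^ n * / y ^ n) = c * x ^ n * / (D * y ^ n) by field; lra.
  apply: Rle_trans (_ : c * x ^ n * / g n <= _); last by apply: Rmult_le_compat_r; lra.
  apply: Rmult_le_compat_l; first nra.
  apply: Rinv_le_contravar; lra.
- have -> : C * / d * (x ^ n * / y ^ n) = C * x ^ n * / (d * y ^ n) by field; lra.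
  apply: Rle_trans (_ : C * x ^ n * / g n <= _); first by apply: Rmult_le_compat_r; lra.
  apply: Rmult_le_compat_l; first nra.
  apply: Rinv_le_contravar; nra.
Qed.

Definition shift_sum (s : list nat) (u : nat -> R) (k : nat) : R :=
  fold_right Rplus 0 (List.map (fun j => u (k + j)%nat) s).

Definition lin_rec (s : list nat) (d : nat) (u : nat -> R) : Prop :=
  forall k, u (k + d)%nat = shift_sum s u k.

Lemma shift_sum_le s (u v : nat -> R) k :
  (forall j, In j s -> u (k + j)%nat <= v (k + j)%nat) -> shift_sum s u k <= shift_sum s v k.
Proof.
rewrite /shift_sum; elim: s => [|j s IH] H /=; first lra.
apply: Rplus_le_compat; first by apply: H; left.
by apply: IH => i hi; apply: H; right.
Qed.

Lemma shift_sum_geom s c r k :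
  shift_sum s (fun i => c * r ^ i) k = c * r ^ k * shift_sum s (pow r) 0.
Proof. by rewrite /shift_sum; elim: s => [|j s /= ->]; rewrite /= ?pow_add; ring. Qed.

Lemma lin_rec_geom s d c r : r ^ d = shift_sum s (pow r) 0 -> lin_rec s d (fun i => c * r ^ i).
Proof. by move=> hr k; rewrite shift_sum_geom pow_add hr; ring. Qed.

Lemma lin_rec_le s d (u v : nat -> R) : (forall j, In j s -> (j < d)%nat) ->
  lin_rec s d u -> lin_rec s d v -> (forall k, (k < d)%nat -> u k <= v k) ->
  forall k, u k <= v k.
Proof.
move=> hs hu hv h0; elim/ltn_ind=> k IH.
case: (ltnP k d) => [/h0 //|hk].
rewrite -(subnK hk) hu hv; apply: shift_sum_le => j /hs hj; apply: IH; lia.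
Qed.

Lemma initial_bounds (u : nat -> R) d : (forall k, (k < d)%nat -> 0 < u k) ->
  exists b B, 0 < b /\ forall k, (k < d)%nat -> b <= u k <= B.
Proof.
elim: d => [|d IH] hu; first by exists 1, 0; split=> [|k]; [lra|].
have [b [B [hb H]]] := IH (fun k hk => hu k (ltnW hk)).
exists (Rmin b (u d)), (Rmax B (u d)); split; first by apply: Rmin_glb_lt => //; apply: hu.
move=> k; rewrite ltnS leq_eqVlt => /orP[/eqP->|/H [h1 h2]].
  by split; [apply: Rmin_r | apply: Rmax_r].
split; [apply: Rle_trans (Rmin_l _ _) h1 | apply: Rle_trans h2 (Rmax_l _ _)].
Qed.

(* Compare [u] with the geometric solutions [(b / r^d) r^k] and [B r^k]. *)
Lemma lin_rec_grows_like s d r (u : nat -> R) : 1 <= r ->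
  (forall j, In j s -> (j < d)%nat) -> r ^ d = shift_sum s (pow r) 0 ->
  lin_rec s d u -> (forall k, (k < d)%nat -> 0 < u k) -> grows_like u r.
Proof.
move=> hr hs hrd hu /initial_bounds [b [B [hb H]]].
have rk k : 1 <= r ^ k by apply: pow_R1_Rle.
have rd : 0 < r ^ d by apply: pow_lt; lra.
exists (b / r ^ d), (Rmax B 0), 0%nat; split; first exact: Rdiv_lt_0_compat.
have geom c : lin_rec s d (fun i => c * r ^ i) by exact: lin_rec_geom.
move=> n _; split; move: n;
  [apply: (lin_rec_le hs (geom _) hu) | apply: (lin_rec_le hs hu (geom _))];
  move=> k /[dup] hk /H [h1 h2].
- have rkd : r ^ k <= r ^ d by apply: Rle_pow => //; apply/leP; lia.
  have brd : 0 <= b * (r ^ d - r ^ k) by nra.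
  apply: Rle_trans h1; have := Rinv_0_lt_compat _ rd.
  rewrite -{2}(Rmult_div_l b (r ^ d)) /Rdiv; nra.
- have := Rmax_l B 0; have := Rmax_r B 0; have := rk k; nra.
Qed.

Lemma quilt_root_gt1 (r : R) : r ^ 7 - r ^ 6 - r ^ 2 - 1 = 0 -> 1 < r.
Proof.
move=> hr; case: (Rle_or_lt r 1) => [r1|//]; exfalso.
have r6 : 0 <= r ^ 6 by rewrite (pow_mult r 3 2); apply: pow2_ge_0.
have : 0 <= r ^ 6 * (1 - r) by apply: Rmult_le_pos; lra.
have := pow2_ge_0 r; nra.
Qed.

Lemma plastic_root_gt1 (l : R) : l ^ 3 - l - 1 = 0 -> 1 < l.
Proof.
move=> hl; case: (Rle_or_lt l 1) => [l1|//]; exfalso.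
have l3 : l ^ 3 = l * (l * l) by ring.
case: (Rle_or_lt 0 l) => l0; first nra.
by case: (Rle_or_lt (l * l) 1) => ll; nra.
Qed.

End Growth.

(** * Legal index sets *)

(* Legality is checked on the natural numbers underlying the ordinals of an
   index set, where [lia] can reason about it. *)
Definition has_idx N (S : {set 'I_N}) (n : nat) : bool := [exists x in S, (x : nat) == n].

Definition fq_compat (t y : nat) : bool :=
  [&& y.+1 != t, t.+1 != y, y + 3 != t, t + 3 != y, y + 4 != t, t + 4 != y,
      ~~ ((t == 3) && (y == 1)) & ~~ ((t == 1) && (y == 3))].

Definition fq_legal (s : pred nat) : Prop :=
  (forall i, s i -> 0 < i) /\ (forall i j, s i -> s j -> fq_compat i j).

Lemma fq_compatC t y : fq_compat t y = fq_compat y t.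
Proof. rewrite /fq_compat; lia. Qed.

Lemma fq_compat_gap t n : fq_compat t n ->
  [|| n == t, n + 2 == t, t + 2 == n, n + 5 <= t | t + 5 <= n].
Proof. rewrite /fq_compat; lia. Qed.

Lemma fq_compat_far t y : y + 5 <= t -> fq_compat t y.
Proof. rewrite /fq_compat; lia. Qed.

Lemma fq_compat_sub2 t : 0 < t - 2 -> fq_compat t (t - 2) -> 4 <= t.
Proof. rewrite /fq_compat; lia. Qed.

Lemma fq_legal_sub (s s' : pred nat) : (forall n, s' n -> s n) -> fq_legal s -> fq_legal s'.
Proof. by move=> H [pos cmp]; split=> [i /H/pos | i j /H si /H sj]; last exact: cmp. Qed.

Lemma fq_legal_cons t (s : pred nat) : 0 < t -> fq_legal s ->
  (forall y, s y -> fq_compat t y) -> fq_legal (fun n => (t == n) || s n).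
Proof.
move=> t0 [pos cmp] ct; split=> [i /orP[/eqP<- //|/pos //] | i j].
move=> /orP[/eqP<-|si] /orP[/eqP<-|sj]; [rewrite /fq_compat; lia | exact: ct | | exact: cmp].
by rewrite fq_compatC; apply: ct.
Qed.

Section Indices.
Variable N : nat.
Implicit Types (S : {set 'I_N}) (x : 'I_N).

Lemma has_idxP S n : reflect (exists2 x, x \in S & (x : nat) = n) (has_idx S n).
Proof.
apply: (iffP existsP) => [[x /andP[xS /eqP<-]]|[x xS <-]]; first by exists x.
by exists x; rewrite xS eqxx.
Qed.

Lemma has_idx_val S x : has_idx S x = (x \in S).
Proof. by apply/has_idxP/idP => [[y yS /val_inj <-] | xS]; last exists x. Qed.

Lemma has_idx_lt S n : has_idx S n -> n < N.
Proof. by case/has_idxP => x _ <-; apply: ltn_ord. Qed.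

Lemma has_idx0 n : has_idx (set0 : {set 'I_N}) n = false.
Proof. by apply/has_idxP => -[x]; rewrite inE. Qed.

Lemma has_idxU1 S x n : has_idx (x |: S) n = ((x : nat) == n) || has_idx S n.
Proof.
apply/has_idxP/orP => [[y]|[/eqP <-|/has_idxP[y yS <-]]].
- by rewrite !inE => /orP[/eqP-> <-|yS <-]; [left | right; rewrite has_idx_val].
- by exists x; rewrite // setU11.
- by exists y; rewrite // !inE yS orbT.
Qed.

Lemma has_idxD1 S x n : has_idx (S :\ x) n = ((x : nat) != n) && has_idx S n.
Proof.
apply/has_idxP/andP => [[y]|[xn /has_idxP[y yS yn]]].
- rewrite !inE => /andP[yx yS] <-; split; last by rewrite has_idx_val.
  by apply: contra yx => /eqP/val_inj->.
- exists y => //; rewrite !inE yS andbT; apply: contra xn => /eqP <-; exact/eqP.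
Qed.

Lemma FQlegalP S : FQlegal S <-> fq_legal (has_idx S).
Proof.
rewrite /FQlegal -/(has_idx S 1) -/(has_idx S 3).
split=> [/andP[/andP[/forallP pos /forallP gap] no13] | [pos compat]].
- split=> [_ /has_idxP[x xS <-] | _ _ /has_idxP[x xS <-] /has_idxP[y yS <-]].
    by have := pos x; rewrite xS.
  have gxy := gap x; have gyx := gap y; rewrite xS yS /= in gxy gyx.
  have := forallP gxy y; have := forallP gyx x; rewrite xS yS /= !inE.
  have n13 (u v : 'I_N) : u \in S -> v \in S -> ~~ (((u : nat) == 1) && ((v : nat) == 3)).
    move=> uS vS; apply: contra no13 => /andP[/eqP e1 /eqP e3].
    by rewrite -e3 -e1 !has_idx_val uS vS.
  have := n13 _ _ xS yS; have := n13 _ _ yS xS; rewrite /fq_compat; lia.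
- apply/andP; split; first (apply/andP; split).
  + by apply/forallP => x; apply/implyP => xS; apply: pos; rewrite has_idx_val.
  + apply/forallP => x; apply/implyP => xS; apply/forallP => y; apply/implyP => yS.
    have := compat x y; rewrite !has_idx_val xS yS /fq_compat !inE => /(_ isT isT).
    lia.
  + apply/negP => /andP[/has_idxP[x xS e1] /has_idxP[y yS e3]].
    by have := compat x y; rewrite !has_idx_val xS yS e1 e3 => /(_ isT isT).
Qed.

End Indices.

Section LegalSets.
Variable N : nat.
Implicit Types (S : {set 'I_N}) (x : 'I_N) (g : nat -> nat).

Lemma FQlegal0 : FQlegal (set0 : {set 'I_N}).
Proof. by apply/FQlegalP; split=> [i|i j]; rewrite has_idx0. Qed.

Lemma FQlegal_pos S n : FQlegal S -> has_idx S n -> 0 < n.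
Proof. by case/FQlegalP => pos _ /pos. Qed.

Lemma FQlegal_compat S n m : FQlegal S -> has_idx S n -> has_idx S m -> fq_compat n m.
Proof. by case/FQlegalP => _ cmp /cmp; apply. Qed.

Lemma FQlegal_below_top S t n : FQlegal S -> has_idx S t -> has_idx S n ->
  n <= t -> t != n -> t - 2 != n -> n + 5 <= t.
Proof. by move=> HS tS nS; have := fq_compat_gap (FQlegal_compat HS tS nS); lia. Qed.

Lemma FQlegal_below_top2 S t n : FQlegal S -> has_idx S t -> has_idx S (t - 2) ->
  has_idx S n -> n <= t -> t != n -> t - 2 != n -> n + 7 <= t.
Proof.
move=> HS tS uS nS; have := FQlegal_below_top HS tS nS.
have := fq_compat_gap (FQlegal_compat HS uS nS); lia.
Qed.

Lemma FQlegal_top_pair S t : FQlegal S -> has_idx S t -> has_idx S (t - 2) -> 4 <= t.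
Proof.
move=> HS tS uS; exact: fq_compat_sub2 (FQlegal_pos HS uS) (FQlegal_compat HS tS uS).
Qed.

Lemma sumq_ge g S n : has_idx S n -> g n <= sumq g S.
Proof. by case/has_idxP => x xS <-; rewrite /sumq (bigD1 x) //=; lia. Qed.

Lemma sumq_eq0 g S K : FQlegal S -> K <= 1 -> (forall n, has_idx S n -> n < K) -> sumq g S = 0.
Proof.
move=> HS K1 HK; rewrite /sumq big1 // => x xS.
have xS' : has_idx S x by rewrite has_idx_val.
have := FQlegal_pos HS xS'; have := HK x xS'; lia.
Qed.

Lemma sumq_ext g g' S : (forall n, has_idx S n -> g n = g' n) -> sumq g S = sumq g' S.
Proof. by move=> H; apply: eq_bigr => x xS; apply: H; rewrite has_idx_val. Qed.

Lemma FQlegal_remove g S t : FQlegal S -> has_idx S t ->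
  exists S', [/\ FQlegal S', sumq g S = g t + sumq g S'
               & forall n, has_idx S' n = (t != n) && has_idx S n].
Proof.
move=> HS /has_idxP[x xS <-]; exists (S :\ x); split.
- apply/FQlegalP; apply: fq_legal_sub (iffLR (FQlegalP S) HS) => n.
  by rewrite has_idxD1 => /andP[].
- by rewrite /sumq (big_setD1 x).
- exact: has_idxD1.
Qed.

Lemma FQlegal_add g S t : t < N -> FQlegal S -> 0 < t -> ~~ has_idx S t ->
  (forall n, has_idx S n -> fq_compat t n) ->
  exists S', [/\ FQlegal S', sumq g S' = g t + sumq g S
               & forall n, has_idx S' n = (t == n) || has_idx S n].
Proof.
move=> tN HS t0 tS ct; pose x := Ordinal tN.
have xS : x \notin S by rewrite -has_idx_val.
exists (x |: S); split.
- apply/FQlegalP; apply: (@fq_legal_sub (fun n => (t == n) || has_idx S n)).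
    by move=> n; rewrite has_idxU1.
  by apply: fq_legal_cons => //; apply/FQlegalP.
- by rewrite /sumq big_setU1.
- exact: has_idxU1.
Qed.

End LegalSets.

Lemma has_idx_widen N M (le_NM : N <= M) (S : {set 'I_N}) n :
  has_idx (widen_ord le_NM @: S) n = has_idx S n.
Proof.
apply/has_idxP/has_idxP => [[y /imsetP[z zS ->] <-]|[y yS <-]]; first by exists z.
by exists (widen_ord le_NM y); first exact: imset_f.
Qed.

Lemma FQlegal_widen N M (le_NM : N <= M) (S : {set 'I_N}) :
  FQlegal (widen_ord le_NM @: S) = FQlegal S.
Proof.
by apply/idP/idP => /FQlegalP H; apply/FQlegalP; apply: fq_legal_sub H => n;
  rewrite has_idx_widen.
Qed.

Lemma sumq_widen g N M (le_NM : N <= M) (S : {set 'I_N}) :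
  sumq g (widen_ord le_NM @: S) = sumq g S.
Proof. by rewrite /sumq big_imset //= => x y _ _ /(congr1 val) /= /val_inj. Qed.

(** * The Fibonacci Quilt sequence *)

(* [n] for [n <= 4], then [quilt (n + 5) = quilt (n + 3) + quilt (n + 2)];
   [quilt 0 = 0] is junk. *)
Fixpoint quilt (n : nat) : nat :=
  if n is (S (S ((S ((S (S _)) as p)) as m))) then quilt m + quilt p else n.

Lemma quiltS n : quilt n.+4.+1 = quilt n.+3 + quilt n.+2.
Proof. by []. Qed.

Lemma quiltS7 n : quilt n.+4.+3 = quilt n.+4.+2 + quilt n.+2.
Proof. have := quiltS n.+2; have := quiltS n.+1; have := quiltS n; lia. Qed.

Lemma quilt_lt n : 0 < n -> quilt n < quilt n.+1.
Proof.
elim/ltn_ind: n => -[|[|[|[|[|n]]]]] // IH _.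
have := IH n.+3 ltac:(lia) isT; have := IH n.+2 ltac:(lia) isT.
have := quiltS n; have := quiltS n.+1; lia.
Qed.

Lemma quilt_leq m n : 0 < m -> m <= n -> quilt m <= quilt n.
Proof.
move=> m0; elim: n => [|n IH]; first lia.
rewrite leq_eqVlt => /orP[/eqP-> //|mn]; have := IH mn; have := @quilt_lt n; lia.
Qed.

Lemma leq_quilt n : n <= quilt n.
Proof. by elim: n => [|[|n] IH] //; have := @quilt_lt n.+1; lia. Qed.

Lemma quilt_small n : n <= 5 -> quilt n = n.
Proof. by case: n => [|[|[|[|[|[|n]]]]]]. Qed.

Lemma quilt_pred_sub5 i : 7 <= i -> quilt i = quilt i.-1 + quilt (i - 5).
Proof. by case: i => [|[|[|[|[|[|[|i]]]]]]] // _; rewrite quiltS7 subSS. Qed.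

Lemma quilt_sub2_sub4_sub8 i : 10 <= i -> quilt i = quilt (i - 2) + quilt (i - 4) + quilt (i - 8).
Proof.
case: i => [|[|[|[|[|[|[|[|[|[|u]]]]]]]]]] // _; rewrite !subSS ?subn0.
have := quiltS u.+4.+1; have := quiltS7 u; lia.
Qed.

Lemma quilt_lt_pred_sub3 i : 5 <= i -> quilt i < quilt i.-1 + quilt (i - 3).
Proof.
case: i => [|[|[|[|[|u]]]]] // _; rewrite !subSS ?subn0 succnK.
have := quiltS u; have := @quilt_lt u.+3 isT; lia.
Qed.

Lemma quilt_sub2_sub4_neq i : 6 <= i -> i <= 9 -> quilt (i - 2) + quilt (i - 4) != quilt i.
Proof. by case: i => [|[|[|[|[|[|[|[|[|[|u]]]]]]]]]]. Qed.

(* [quilt k.+2] is the bound [quilt_sum_ub] gives for indices below [k]; with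
   truncated subtraction these inequalities also hold for small arguments. *)
Lemma quilt_sub2_sub4_le i : 3 <= i -> quilt (i - 2) + quilt (i - 6).+2 <= quilt i.
Proof.
case: i => [|[|[|[|[|[|u]]]]]] // _; rewrite !subSS ?subn0.
have := quiltS u.+1; have := @quilt_lt u.+2 isT; lia.
Qed.

Lemma quilt_top_pair_bound t : 4 <= t -> quilt t + quilt (t - 2) + quilt (t - 6).+2 <= quilt t.+3.
Proof.
case: t => [|[|[|[|[|[|u]]]]]] // _; rewrite !subSS ?subn0.
have := quiltS u.+4; have := quiltS u.+2; have := @quilt_leq u.+2 u.+4.+1 isT ltac:(lia); lia.
Qed.

Lemma quilt_top_bound t : 1 <= t -> quilt t + quilt (t - 4).+2 <= quilt t.+3.
Proof.
case: t => [|[|[|[|u]]]] // _; rewrite !subSS ?subn0.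
have := quiltS u.+2; have := @quilt_leq u.+2 u.+4.+1 isT ltac:(lia); lia.
Qed.

(* Peel off the largest index [t], and [t - 2] if it occurs: the remaining
   indices are then at most [t - 5], resp. [t - 7]. *)
Lemma quilt_sum_ub K N (S : {set 'I_N}) : FQlegal S -> (forall n, has_idx S n -> n < K) ->
  sumq quilt S < quilt K.+2.
Proof.
elim/ltn_ind: K S => -[|t] IH S HS HK; first by rewrite (sumq_eq0 _ HS _ HK).
case tS: (has_idx S t); last first.
  have below n : has_idx S n -> n < t.
    move=> nS; have nt : n != t by apply/eqP => e; rewrite -e nS in tS.
    by have := HK n nS; lia.
  have := IH t (ltnSn t) S HS below; have := @quilt_lt t.+2 isT; lia.
have below_t n : has_idx S n -> n <= t by move/HK.
have [S1 [HS1 sum1 idx1]] := FQlegal_remove quilt HS tS.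
case uS1: (has_idx S1 (t - 2)).
  have uS : has_idx S (t - 2) by move: uS1; rewrite idx1 => /andP[].
  have [S2 [HS2 sum2 idx2]] := FQlegal_remove quilt HS1 uS1.
  have below n : has_idx S2 n -> n < t - 6.
    rewrite idx2 idx1 => /and3P[nu nt nS].
    have := FQlegal_below_top2 HS tS uS nS (below_t n nS) nt nu; lia.
  have := IH (t - 6) ltac:(lia) S2 HS2 below.
  have := quilt_top_pair_bound (FQlegal_top_pair HS tS uS); lia.
have below n : has_idx S1 n -> n < t - 4.
  move=> nS1; move: (nS1); rewrite idx1 => /andP[nt nS].
  have nu : t - 2 != n by apply/eqP => e; rewrite e nS1 in uS1.
  have := FQlegal_below_top HS tS nS (below_t n nS) nt nu; lia.
have := IH (t - 4) ltac:(lia) S1 HS1 below.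
have := quilt_top_bound (FQlegal_pos HS tS); lia.
Qed.

Lemma FQlegal_single g N t : 0 < t -> t < N ->
  exists S : {set 'I_N}, [/\ FQlegal S, (forall n, has_idx S n -> n = t) & sumq g S = g t].
Proof.
move=> t0 tN; have nt : ~~ has_idx (set0 : {set 'I_N}) t by rewrite has_idx0.
have ct n : has_idx (set0 : {set 'I_N}) n -> fq_compat t n by rewrite has_idx0.
have [S [HS sumS idxS]] := FQlegal_add g tN (FQlegal0 N) t0 nt ct.
exists S; split=> // [n|]; first by rewrite idxS has_idx0 orbF => /eqP.
by rewrite sumS /sumq big_set0 addn0.
Qed.

Lemma quilt_sum_rep_small N i m : i <= 6 -> i <= N -> m < quilt i ->
  exists S : {set 'I_N}, [/\ FQlegal S, (forall n, has_idx S n -> n < i) & sumq quilt S = m].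
Proof.
move=> i6 iN mi; case: (posnP m) => [->|m0].
  by exists set0; split=> [|n|]; rewrite ?has_idx0 /sumq ?big_set0 //; apply: FQlegal0.
case: (ltnP m i) => [lt_mi|le_im].
  have [S [HS idxS sumS]] := FQlegal_single quilt m0 (leq_trans lt_mi iN).
  exists S; split=> // [n /idxS -> //|]; rewrite sumS quilt_small //; lia.
have [ei em] : i = 6 /\ m = 6.
  by case: i {iN} i6 mi le_im => [|[|[|[|[|[|[|i]]]]]]] //=; lia.
subst i m.
have [S [HS idxS sumS]] := FQlegal_single quilt (N := N) (t := 4) isT ltac:(lia).
have n2 : ~~ has_idx S 2 by apply/negP => /idxS.
have c2 n : has_idx S n -> fq_compat 2 n by move/idxS ->.
have [S' [HS' sumS' idxS']] := FQlegal_add quilt (leq_trans (isT : 2 < 6) iN) HS isT n2 c2.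
exists S'; split=> // [n|]; last by rewrite sumS' sumS.
by rewrite idxS' => /orP[/eqP <- //|/idxS ->].
Qed.

Lemma quilt_sum_rep N i m : 0 < i -> i <= N -> m < quilt i ->
  exists S : {set 'I_N}, [/\ FQlegal S, (forall n, has_idx S n -> n < i) & sumq quilt S = m].
Proof.
elim/ltn_ind: i m => i IH m i0 iN mi.
case: (leqP i 6) => [i6|i7]; first exact: quilt_sum_rep_small.
have quilt_i := quilt_pred_sub5 i7.
case: (ltnP m (quilt i.-1)) => m_lo.
  have [S [HS below sumS]] := IH i.-1 ltac:(lia) m ltac:(lia) ltac:(lia) m_lo.
  by exists S; split=> // n /below; lia.
have [S [HS below sumS]] :=
  IH (i - 5) ltac:(lia) (m - quilt i.-1) ltac:(lia) ltac:(lia) ltac:(lia).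
have top_new : ~~ has_idx S i.-1 by apply/negP => /below; lia.
have top_compat n : has_idx S n -> fq_compat i.-1 n.
  by move/below => ni; apply: fq_compat_far; lia.
have top_lt : i.-1 < N by lia.
have [S' [HS' sumS' idxS']] := FQlegal_add quilt top_lt HS ltac:(lia) top_new top_compat.
exists S'; split=> // [n|]; last by rewrite sumS' sumS; lia.
by rewrite idxS' => /orP[/eqP <-|/below]; lia.
Qed.

(* By strong induction on [i], distinguishing which of the largest admissible
   indices [i - 1], [i - 2] occur. *)
Section NoSelfDecomposition.
Variables (N i : nat) (S : {set 'I_N}).
Hypotheses (i0 : 0 < i) (HS : FQlegal S) (below_i : forall n, has_idx S n -> n < i).
Hypothesis IH : forall j, j < i -> forall S' : {set 'I_N}, 0 < j -> FQlegal S' ->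
  (forall n, has_idx S' n -> n < j) -> sumq quilt S' != quilt j.

Lemma not_sum_with_pred : has_idx S i.-1 -> sumq quilt S != quilt i.
Proof.
move=> tS; have [S1 [HS1 -> idx1]] := FQlegal_remove quilt HS tS.
have t0 := FQlegal_pos HS tS.
case uS1: (has_idx S1 (i.-1 - 2)).
  have uS : has_idx S (i.-1 - 2) by move: uS1; rewrite idx1 => /andP[].
  have := quilt_lt_pred_sub3 (i := i); rewrite (_ : i - 3 = i.-1 - 2); last lia.
  have := sumq_ge quilt uS1; have := FQlegal_top_pair HS tS uS; lia.
have below n : has_idx S1 n -> n < i - 5.
  move=> nS1; move: (nS1); rewrite idx1 => /andP[nt nS].
  have nu : i.-1 - 2 != n by apply/eqP => e; rewrite e nS1 in uS1.
  have := FQlegal_below_top HS tS nS ltac:(have := below_i nS; lia) nt nu; lia.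
case: (leqP 7 i) => i7.
  by have := @IH (i - 5) ltac:(lia) S1 ltac:(lia) HS1 below; rewrite (quilt_pred_sub5 i7); lia.
rewrite (sumq_eq0 _ HS1 _ below) ?addn0; last lia.
by have := @quilt_lt i.-1 t0; rewrite prednK //; lia.
Qed.

Lemma not_sum_with_sub2 : ~~ has_idx S i.-1 -> has_idx S (i - 2) -> sumq quilt S != quilt i.
Proof.
move=> nt1 tS; have [S1 [HS1 -> idx1]] := FQlegal_remove quilt HS tS.
have below_t n : has_idx S n -> n <= i - 2.
  move=> nS; have : i.-1 != n by apply/eqP => e; rewrite e nS in nt1.
  by have := below_i nS; lia.
case uS1: (has_idx S1 (i - 2 - 2)).
  have uS : has_idx S (i - 2 - 2) by move: uS1; rewrite idx1 => /andP[].
  have [S2 [HS2 -> idx2]] := FQlegal_remove quilt HS1 uS1.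
  have i6 := FQlegal_top_pair HS tS uS.
  have below n : has_idx S2 n -> n < i - 8.
    rewrite idx2 idx1 => /and3P[nu nt nS].
    have := FQlegal_below_top2 HS tS uS nS (below_t n nS) nt nu; lia.
  rewrite (_ : i - 2 - 2 = i - 4); last lia.
  case: (leqP 10 i) => i10.
    have := @IH (i - 8) ltac:(lia) S2 ltac:(lia) HS2 below.
    by rewrite (quilt_sub2_sub4_sub8 i10); lia.
  by rewrite (sumq_eq0 _ HS2 _ below) ?addn0; [apply: quilt_sub2_sub4_neq | lia]; lia.
have below n : has_idx S1 n -> n < i - 6.
  move=> nS1; move: (nS1); rewrite idx1 => /andP[nt nS].
  have nu : i - 2 - 2 != n by apply/eqP => e; rewrite e nS1 in uS1.
  have := FQlegal_below_top HS tS nS (below_t n nS) nt nu; lia.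
have := quilt_sum_ub HS1 below; have := quilt_sub2_sub4_le (i := i).
have := FQlegal_pos HS tS; lia.
Qed.

Lemma not_sum_without_top : ~~ has_idx S i.-1 -> ~~ has_idx S (i - 2) -> sumq quilt S != quilt i.
Proof.
move=> nt1 nt2.
have below n : has_idx S n -> n < i - 2.
  move=> nS; have := below_i nS.
  have : i.-1 != n by apply/eqP => e; rewrite e nS in nt1.
  have : i - 2 != n by apply/eqP => e; rewrite e nS in nt2.
  lia.
case: (leqP 2 i) => i2.
  by have := quilt_sum_ub HS below; rewrite (_ : (i - 2).+2 = i); [lia | lia].
have i1 : i = 1 by lia.
by rewrite (sumq_eq0 _ HS _ below) i1.
Qed.

End NoSelfDecomposition.

Lemma quilt_not_sum N i (S : {set 'I_N}) : 0 < i -> FQlegal S ->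
  (forall n, has_idx S n -> n < i) -> sumq quilt S != quilt i.
Proof.
elim/ltn_ind: i S => i IH S i0 HS below.
case t1: (has_idx S i.-1); first exact: (not_sum_with_pred i0 HS below IH).
case t2: (has_idx S (i - 2)); first by apply: (not_sum_with_sub2 i0 HS below IH); rewrite ?t1.
by apply: (not_sum_without_top i0 HS below); rewrite ?t1 ?t2.
Qed.

Lemma IsFQ_quilt q : IsFQ q -> forall i, 0 < i -> q i = quilt i.
Proof.
move=> hq; elim/ltn_ind => i IH i0; have [_ _ q_not_sum q_sums] := hq i i0.
have sumq_q (S : {set 'I_i}) : FQlegal S -> sumq q S = sumq quilt S.
  move=> HS; apply: sumq_ext => n nS.
  exact: IH (has_idx_lt nS) (FQlegal_pos HS nS).
case: (ltngtP (q i) (quilt i)) => // [lt_q|lt_quilt].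
- have [S [HS _ sumS]] := quilt_sum_rep i0 (leqnn i) lt_q.
  by case: q_not_sum; exists S; rewrite sumq_q.
- have [S [HS sumS]] := q_sums (quilt i) (leq_trans i0 (leq_quilt i)) lt_quilt.
  by have := quilt_not_sum i0 HS (@has_idx_lt _ S); rewrite -sumq_q // sumS eqxx.
Qed.

(** * Counting legal sets *)

Definition all_idx N (S : {set 'I_N}) (a : pred nat) : bool := [forall x in S, a x].

Lemma all_idxP N (S : {set 'I_N}) (a : pred nat) :
  reflect (forall n, has_idx S n -> a n) (all_idx S a).
Proof.
apply: (iffP forallP) => [H n /has_idxP[x xS <-] | H x]; first by have := H x; rewrite xS.
by apply/implyP => xS; apply: H; rewrite has_idx_val.
Qed.

Definition legal_on M (a : pred nat) : {set {set 'I_M}} :=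
  [set S : {set 'I_M} | FQlegal S && all_idx S a].

Definition nlegal k : nat := #|[set S : {set 'I_k.+1} | FQlegal S]|.

Lemma card_legal_on_ext M (a b : pred nat) : a =1 b -> #|legal_on M a| = #|legal_on M b|.
Proof.
move=> eq_ab; apply: eq_card => S; rewrite !inE; congr (_ && _).
by apply/all_idxP/all_idxP => H n /H; rewrite eq_ab.
Qed.

Lemma card_widen N M (le_NM : N <= M) (P : pred {set 'I_M}) :
  (forall S, P S -> forall n, has_idx S n -> n < N) ->
  #|[set S | P S]| = #|[set S : {set 'I_N} | P (widen_ord le_NM @: S)]|.
Proof.
move=> HP; have inj : injective (fun S : {set 'I_N} => widen_ord le_NM @: S).
  by apply: imset_inj => x y /(congr1 val) /= /val_inj.
rewrite -(card_imset _ inj); apply: eq_card => S; rewrite inE.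
apply/idP/imsetP => [PS|[S' ]]; last by rewrite inE => PS' ->.
have S_widen : S = widen_ord le_NM @: [set x : 'I_N | widen_ord le_NM x \in S].
  apply/setP => y; apply/idP/imsetP => [yS|[z zS ->]]; last by rewrite inE in zS.
  have yN : y < N by apply: (HP S PS); rewrite has_idx_val.
  have y_eq : y = widen_ord le_NM (Ordinal yN) by apply: val_inj.
  by exists (Ordinal yN); rewrite // inE -y_eq.
by exists [set x : 'I_N | widen_ord le_NM x \in S]; rewrite // inE -S_widen.
Qed.

Lemma card_legal_on_le M k : k < M -> #|legal_on M (fun y => y <= k)| = nlegal k.
Proof.
move=> kM; rewrite /legal_on (card_widen kM).
  apply: eq_card => S; rewrite !inE FQlegal_widen.
  suff -> : all_idx (widen_ord kM @: S) (fun y => y <= k) by rewrite andbT.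
  by apply/all_idxP => n; rewrite has_idx_widen => /has_idx_lt.
by move=> S /andP[_ /all_idxP H] n /H.
Qed.

Section SplitAtIndex.
Variables (M : nat) (a : pred nat) (x : 'I_M).
Let a_out := fun y => a y && (y != x).
Let a_in := fun y => [&& a y, y != x & fq_compat x y].

Lemma legal_on_setD : legal_on M a :\: [set S : {set 'I_M} | x \in S] = legal_on M a_out.
Proof.
apply/setP => S; rewrite !inE /a_out -has_idx_val.
case: (FQlegal S); rewrite ?andbF //=.
apply/andP/all_idxP => [[xS /all_idxP H] n nS | H].
  by rewrite H //=; apply: contraNneq xS => <-.
by split; [apply/negP => /H /andP[_]; rewrite eqxx | apply/all_idxP => n /H /andP[]].
Qed.

Lemma legal_on_setI : a x -> 0 < x ->
  legal_on M a :&: [set S : {set 'I_M} | x \in S] = (fun S => x |: S) @: legal_on M a_in.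
Proof.
move=> ax x0; apply/setP => S; rewrite !inE; apply/idP/imsetP.
- case/andP=> /andP[HS /all_idxP AS] xS.
  have xS' : has_idx S x by rewrite has_idx_val.
  exists (S :\ x); last by rewrite setD1K.
  rewrite inE; apply/andP; split.
    apply/FQlegalP; apply: fq_legal_sub (iffLR (FQlegalP S) HS) => n.
    by rewrite has_idxD1 => /andP[].
  apply/all_idxP => n; rewrite has_idxD1 => /andP[xn nS].
  by rewrite /a_in AS // eq_sym xn (FQlegal_compat HS xS' nS).
- case=> S'; rewrite inE => /andP[HS' /all_idxP AS'] ->.
  rewrite setU11 andbT; apply/andP; split.
    apply/FQlegalP; apply: (@fq_legal_sub (fun n => ((x : nat) == n) || has_idx S' n)).
      by move=> n; rewrite has_idxU1.
    apply: fq_legal_cons => //; first exact/FQlegalP.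
    by move=> y /AS' /and3P[].
  by apply/all_idxP => n; rewrite has_idxU1 => /orP[/eqP <- //|/AS' /andP[]].
Qed.

Lemma card_legal_on_split : a x -> 0 < x ->
  #|legal_on M a| = #|legal_on M a_out| + #|legal_on M a_in|.
Proof.
move=> ax x0; rewrite -(cardsID [set S : {set 'I_M} | x \in S]).
rewrite legal_on_setD legal_on_setI // addnC.
congr (_ + _); apply: card_in_imset => S1 S2; rewrite !inE.
have notin S : all_idx S a_in -> x \notin S.
  by move=> /all_idxP H; apply/negP; rewrite -has_idx_val => /H /and3P[_]; rewrite eqxx.
by move=> /andP[_ /notin n1] /andP[_ /notin n2] e; rewrite -(setU1K n1) -(setU1K n2) e.
Qed.

End SplitAtIndex.

(* Split on whether the top index [k + 7] occurs, and then on [k + 5]. *)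
Lemma nlegal_rec k : nlegal (k + 7) = nlegal (k + 6) + nlegal (k + 2) + nlegal k.
Proof.
set t := k + 7; have tM : t < t.+1 by [].
have uM : t - 2 < t.+1 by lia.
have below j : j <= t -> j < t.+1 by [].
rewrite -(card_legal_on_le tM) (@card_legal_on_split _ _ (Ordinal tM)) //=; last lia.
rewrite [X in _ + X](@card_legal_on_split _ _ (Ordinal uM)) /=; first last.
- lia.
- by rewrite /fq_compat; lia.
rewrite -addnA -(card_legal_on_le (below (k + 6) _)) -?(card_legal_on_le (below (k + 2) _))
  -?(card_legal_on_le (below k _)); try lia.
congr (_ + (_ + _)); apply: card_legal_on_ext => y /=.
- lia.
- apply/idP/idP => [/andP[/and3P[? ? /fq_compat_gap ?] ?] | ?]; first lia.
  by rewrite fq_compat_far; lia.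
- apply/idP/idP => [/and3P[/and3P[? ? /fq_compat_gap ?] ? /fq_compat_gap ?] | ?]; first lia.
  by rewrite !fq_compat_far; lia.
Qed.

Lemma nlegal_gt0 k : 0 < nlegal k.
Proof. by apply/card_gt0P; exists set0; rewrite inE FQlegal0. Qed.

Lemma nlegal_grows_like r : (r ^ 7 - r ^ 6 - r ^ 2 - 1 = 0)%R ->
  grows_like (fun k => INR (nlegal k)) r.
Proof.
move=> hr; apply: (@lin_rec_grows_like [:: 6; 2; 0] 7); first by have := quilt_root_gt1 hr; lra.
- by move=> j /= [<-|[<-|[<-|[]]]].
- by rewrite /shift_sum /=; lra.
- by move=> k; rewrite /shift_sum /= nlegal_rec !plus_INR addn0; lra.
- by move=> k _; apply/lt_0_INR/ltP/nlegal_gt0.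
Qed.

Lemma sum_card_fibers (T : finType) (P : pred T) (f : T -> nat) K :
  \sum_(m < K) #|[set S | P S && (f S == m)]| = #|[set S | P S && (f S < K)]|.
Proof.
elim: K => [|K IH].
  rewrite big_ord0; apply/esym/eqP; rewrite cards_eq0; apply/eqP/setP => S.
  by rewrite !inE ltn0 andbF.
rewrite big_ord_recr /= IH -(cardsID [set S | f S < K] [set S | P S && (f S < K.+1)]).
by congr (_ + _); apply: eq_card => S; rewrite !inE; case: (P S) => /=; lia.
Qed.

Section Averages.
Variable q : nat -> nat.
Hypothesis hq : IsFQ q.

Lemma sumq_IsFQ N (S : {set 'I_N}) : FQlegal S -> sumq q S = sumq quilt S.
Proof. by move=> HS; apply: sumq_ext => n /(FQlegal_pos HS); apply: IsFQ_quilt. Qed.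

Lemma sum_dFQ_card M :
  \sum_(m < M) dFQ q m = #|[set S : {set 'I_M} | FQlegal S && (sumq q S < M)]|.
Proof.
rewrite -sum_card_fibers; apply: eq_bigr => m _; rewrite /dFQ (card_widen (ltn_ord m)).
  by apply: eq_card => S; rewrite !inE FQlegal_widen sumq_widen.
move=> S /andP[HS /eqP sumS] n nS; have := sumq_ge q nS.
rewrite sumS (IsFQ_quilt hq (FQlegal_pos HS nS)); have := leq_quilt n; lia.
Qed.

Lemma nlegal_le_sum_dFQ n : 2 <= n -> nlegal (n - 2) <= \sum_(m < q n.+1) dFQ q m.
Proof.
move=> n2; rewrite sum_dFQ_card (IsFQ_quilt hq (ltn0Sn n)).
rewrite -(@card_legal_on_le (quilt n.+1) (n - 2)); last by have := leq_quilt n.+1; lia.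
apply: subset_leq_card; apply/subsetP => S; rewrite !inE => /andP[HS /all_idxP below].
rewrite HS (sumq_IsFQ HS) /=; have := @quilt_sum_ub (n - 1) _ S HS.
by rewrite (_ : (n - 1).+2 = n.+1); [apply=> k /below; lia | lia].
Qed.

Lemma sum_dFQ_le_nlegal n : \sum_(m < q n.+1) dFQ q m <= nlegal n.
Proof.
rewrite sum_dFQ_card (IsFQ_quilt hq (ltn0Sn n)).
rewrite -(@card_legal_on_le (quilt n.+1) n); last by have := leq_quilt n.+1; lia.
apply: subset_leq_card; apply/subsetP => S; rewrite !inE => /andP[HS sumS].
rewrite HS; apply/all_idxP => k kS; rewrite leqNgt; apply/negP => nk.
have := sumq_ge q kS; rewrite (IsFQ_quilt hq (FQlegal_pos HS kS)).
have := quilt_leq (ltn0Sn n) nk; lia.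
Qed.

Lemma IsFQ_grows_like l : (l ^ 3 - l - 1 = 0)%R -> grows_like (fun k => INR (q k.+1)) l.
Proof.
move=> hl; apply: (@lin_rec_grows_like [:: 2; 1] 4); first by have := plastic_root_gt1 hl; lra.
- by move=> j /= [<-|[<-|[]]].
- by rewrite /shift_sum /=; nra.
- move=> k; rewrite /shift_sum /= !addnS !addn0 !(IsFQ_quilt hq) //.
  by rewrite quiltS plus_INR; lra.
- by move=> k _; apply/lt_0_INR/ltP; have [] := hq (ltn0Sn k).
Qed.

Lemma sum_dFQ_grows_like r : (r ^ 7 - r ^ 6 - r ^ 2 - 1 = 0)%R ->
  grows_like (fun n => INR (\sum_(m < q n.+1) dFQ q m)) r.
Proof.
move=> hr; have r_gt1 := quilt_root_gt1 hr.
apply: (grows_like_sandwich (j := 2) (N0 := 2) _ (nlegal_grows_like hr)) => [|n n2]; first lra.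
by split; apply/le_INR/leP; [apply: nlegal_le_sum_dFQ | apply: sum_dFQ_le_nlegal].
Qed.

End Averages.

Theorem mainTheorem12 (q : nat -> nat) (hq : IsFQ q) (r1 lam1 : R)
  (hr1 : (r1 ^ 7 - r1 ^ 6 - r1 ^ 2 - 1 = 0)%R)
  (hr1max : forall r : R, (r ^ 7 - r ^ 6 - r ^ 2 - 1 = 0)%R -> (r <= r1)%R)
  (hlam1 : (lam1 ^ 3 - lam1 - 1 = 0)%R) :
  exists C1 C2 : R, (0 < C1)%R /\ (C1 < C2)%R /\
    exists N : nat, forall n : nat, (N <= n)%N ->
      (C1 * (r1 / lam1) ^ n <= dFQave q n <= C2 * (r1 / lam1) ^ n)%R.
Proof.
have r1_gt1 := quilt_root_gt1 hr1; have lam1_gt1 := plastic_root_gt1 hlam1.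
apply: grows_like_bounds; first by apply: Rdiv_lt_0_compat; lra.
by apply: (grows_like_div _ _ (sum_dFQ_grows_like hq hr1) (IsFQ_grows_like hq hlam1)); lra.
Qed.
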